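(* Let $m\ge 1$ and $n\ge 3$ be odd integers. Then there exists a $\Delta$-permutation $\psi$ of $\mathbb{Z}_m\times\mathbb{Z}_{2n}$ such that (1) $\Delta=[\,^{2mn-6}(1,0),\ ^{3}(2,0),\ ^{1}(0,2),\ ^{1}(0,n-2),\ ^{1}(0,n)]$, and (2) $\psi(0,0)=(0,n)$ and $\psi(0,n)=(0,n+2)$.
   Context: The notation $[\,^{\alpha_1}a_1,\ldots,\,^{\alpha_t}a_t]$ denotes the multiset containing $\alpha_i$ copies of $a_i$. A $v$-list of a group is a multiset of $v$ elements of the group. Given a group $\Gamma$ (written additively) of order $v$ and a $v$-list $\Delta$ of $\Gamma$, a permutation $\varphi$ of $\Gamma$ is a $\Delta$-permutation if the multiset $[\varphi(a)-a \mid a\in\Gamma]$ equals $\Delta$. *)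

From mathcomp Require Import all_boot all_order all_algebra all_fingroup.
Set Implicit Arguments. Unset Strict Implicit. Unset Printing Implicit Defensive.
Import GRing.Theory.
Local Open Scope ring_scope.

(* Z_k (k >= 1) is represented as 'I_(k.-1.+1), which carries MathComp's
   zmodType structure and is literally Z/kZ for k >= 1 (including k = 1). *)
Definition G (m n : nat) := ('I_(m.-1.+1) * 'I_((2 * n)%N.-1.+1))%type.

Definition elt (m n a b : nat) : G m n := (inZp a, inZp b).

(* A v-list is represented as a sequence (a multiset up to perm_eq).
   phi is a Delta-permutation iff the multiset [phi(a) - a | a in Gamma]
   equals Delta. *)
Definition is_Delta_perm (m n : nat) (phi : {perm G m n}) (Delta : seq (G m n)) :=
  perm_eq [seq phi a - a | a : G m n] Delta.

Definition Delta3 (m n : nat) : seq (G m n) :=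
  nseq (2 * m * n - 6) (elt m n 1 0) ++ nseq 3 (elt m n 2 0)
  ++ [:: elt m n 0 2; elt m n 0 (n - 2); elt m n 0 n].

(* Start from the translation (x, y) |-> (x + 1, y) of Z_m x Z_2n, all of
   whose differences are (1, 0), and modify it on the three rows
   y in {0, n, n + 2}.  First cycle the points (0, 0) -> (0, n) -> (0, n + 2)
   -> (0, 0) of column 0; then on those rows replace x |-> x + 1 by
   x |-> t x + 1, where t swaps 0 and -1, so that column 0 stays in place and
   column -1 jumps to column 1.  The three points of column 0 then contribute
   the differences (0, n), (0, 2), (0, n - 2), the three points of column -1
   contribute (2, 0), and every other point still contributes (1, 0).
   For m = 1 columns 0 and -1 coincide, but then so do (1, 0) and (2, 0). *)

From mathcomp Require Import all_boot all_order all_algebra all_fingroup zify.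
Set Implicit Arguments. Unset Strict Implicit. Unset Printing Implicit Defensive.
Import GRing.Theory.
Local Open Scope ring_scope.

Lemma map_const_nseq (T V : Type) (e : V) (s : seq T) :
  [seq e | _ <- s] = nseq (size s) e.
Proof. by elim: s => //= x s ->. Qed.

Lemma perm_image_const_out (T : finType) (V : eqType) (f : T -> V)
    (s : seq T) (e : V) :
  uniq s -> (forall x, x \notin s -> f x = e) ->
  perm_eq [seq f x | x : T] (map f s ++ nseq (#|T| - size s) e).
Proof.
move=> s_uniq f_out; set rest := [seq x <- enum T | x \notin s].
have enum_split : perm_eq (enum T) (s ++ rest).
  rewrite -(perm_filterC (mem s) (enum T)) perm_cat2r.
  apply: uniq_perm => //; first exact/filter_uniq/enum_uniq.
  by move=> x; rewrite mem_filter mem_enum andbT.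
have size_rest : size rest = (#|T| - size s)%N.
  by rewrite cardT (perm_size enum_split) size_cat addKn.
have map_rest : map f rest = nseq (#|T| - size s) e.
  rewrite -size_rest -map_const_nseq; apply/eq_in_map => x.
  by rewrite mem_filter => /andP[/f_out].
by rewrite -map_rest -map_cat; apply: perm_map.
Qed.

Lemma subr_pair (U V : zmodType) (a c : U) (b d : V) :
  (a, b) - (c, d) = (a - c, b - d).
Proof. by []. Qed.

Section CycleShift.

Variables (X Y : finZmodType) (u : X) (s : seq Y) (c : {perm Y}).
Hypotheses (s_uniq : uniq s) (c_on : perm_on [set y in s] c).

Definition column_cycle (p : X * Y) : X * Y :=
  (p.1, if p.1 == 0 then c p.2 else p.2).

Definition row_shift (p : X * Y) : X * Y :=
  ((if p.2 \in s then tperm 0 (- u) p.1 else p.1) + u, p.2).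

Lemma column_cycle_inj : injective column_cycle.
Proof.
move=> [x y] [_ y'] [/= <-].
by case: ifP => _; first move/perm_inj; move->.
Qed.

Lemma row_shift_inj : injective row_shift.
Proof.
move=> [x y] [x' y'] [/= ex eyy]; subst y'; move: ex.
by case: (y \in s) => /addIr; first move/perm_inj; move->.
Qed.

Definition cycle_shift : {perm X * Y} :=
  perm column_cycle_inj * perm row_shift_inj.

Lemma cycle_shiftE p : cycle_shift p = row_shift (column_cycle p).
Proof. by rewrite permM !permE. Qed.

Lemma mem_perm_on y : (c y \in s) = (y \in s).
Proof. by have := perm_closed y c_on; rewrite !inE. Qed.

Lemma cycle_shift_column0 y : y \in s -> cycle_shift (0, y) = (0, c y).
Proof.
by move=> sy; rewrite cycle_shiftE /row_shift /= eqxx mem_perm_on sy tpermL addNr.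
Qed.

Lemma cycle_shift_subr x y : cycle_shift (x, y) - (x, y) =
  if y \in s then
    if x == 0 then (0, c y - y) else if x == - u then (u *+ 2, 0) else (u, 0)
  else (u, 0).
Proof.
have [sy|s'y] := boolP (y \in s); last first.
  have cy : c y = y by apply: (out_perm c_on); rewrite inE.
  rewrite cycle_shiftE /row_shift /column_cycle /= cy if_same (negbTE s'y) /=.
  by rewrite subr_pair addrAC !subrr add0r.
have [->|x_neq0] := eqVneq x 0.
  by rewrite (cycle_shift_column0 sy) subr_pair !subrr.
rewrite cycle_shiftE /row_shift /column_cycle /= (negbTE x_neq0) sy /=.
rewrite subr_pair subrr.
have [->|x_neq] := eqVneq x (- u); first by rewrite tpermR add0r opprK mulr2n.
by rewrite tpermD 1?eq_sym // addrAC subrr add0r.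
Qed.

Lemma perm_cycle_shift_subr_neq0 : u != 0 ->
  perm_eq [seq cycle_shift p - p | p : X * Y]
    (nseq (#|X| * #|Y| - 2 * size s) (u, 0) ++ nseq (size s) (u *+ 2, 0)
       ++ [seq (0, c y - y) | y <- s]).
Proof.
move=> u_neq0; pose t := [seq (0, y) | y <- s] ++ [seq (- u, y) | y <- s].
have pair_inj x : injective (pair x : Y -> X * Y) by move=> y y' [].
have t_uniq : uniq t.
  rewrite cat_uniq !map_inj_uniq // s_uniq andbT /=.
  apply/hasPn => _ /mapP[y _ ->]; apply/mapP => -[y' _ [/eqP]].
  by move=> u0 _; move: u_neq0; rewrite -oppr_eq0 u0.
have cycle_shift_subr_out p : p \notin t -> cycle_shift p - p = (u, 0).
  case: p => x y; rewrite cycle_shift_subr mem_cat => /norP[col0 colNu].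
  case: ifP => // sy; case: eqP col0 => [-> /negP[]|_ _]; first exact: map_f.
  by case: eqP colNu => [-> /negP[]|]; first exact: map_f.
have map_t : [seq cycle_shift p - p | p <- t] =
    [seq (0, c y - y) | y <- s] ++ nseq (size s) (u *+ 2, 0).
  rewrite map_cat -!map_comp -map_const_nseq; congr (_ ++ _).
    by apply/eq_in_map => y sy /=; rewrite cycle_shift_subr sy eqxx.
  apply/eq_in_map => y sy /=; rewrite cycle_shift_subr sy eqxx.
  by move: u_neq0; rewrite -oppr_eq0 => /negbTE->.
have := perm_image_const_out t_uniq cycle_shift_subr_out.
rewrite map_t card_prod size_cat !size_map addnn -mul2n => /perm_trans; apply.
by rewrite perm_catC perm_cat2l perm_catC.
Qed.

Lemma perm_cycle_shift_subr_eq0 : u = 0 ->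
  perm_eq [seq cycle_shift p - p | p : X * Y]
    (nseq (#|X| * #|Y| - size s) (u, 0) ++ [seq (0, c y - y) | y <- s]).
Proof.
move=> u0; pose t : seq (X * Y) := [seq (0, y) | y <- s].
have t_uniq : uniq t by rewrite map_inj_uniq // => y y' [].
have cycle_shift_subr_out p : p \notin t -> cycle_shift p - p = (u, 0).
  case: p => x y; rewrite cycle_shift_subr => col0.
  case: ifP => // sy; case: eqP col0 => [-> /negP[]|_ _]; first exact: map_f.
  by case: ifP => // _; rewrite u0 mul0rn.
have map_t : [seq cycle_shift p - p | p <- t] = [seq (0, c y - y) | y <- s].
  rewrite -map_comp; apply/eq_in_map => y sy /=.
  by rewrite cycle_shift_subr sy eqxx.
have := perm_image_const_out t_uniq cycle_shift_subr_out.
by rewrite map_t card_prod size_map => /perm_trans; apply; rewrite perm_catC.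
Qed.

Lemma perm_cycle_shift_subr : (2 * size s <= #|X| * #|Y|)%N ->
  perm_eq [seq cycle_shift p - p | p : X * Y]
    (nseq (#|X| * #|Y| - 2 * size s) (u, 0) ++ nseq (size s) (u *+ 2, 0)
       ++ [seq (0, c y - y) | y <- s]).
Proof.
move=> s_small.
have [u0|u_neq0] := eqVneq u 0; last exact: perm_cycle_shift_subr_neq0.
have -> : (u *+ 2, 0) = (u, 0) :> X * Y by rewrite u0 mul0rn.
rewrite catA -nseqD.
have -> : (#|X| * #|Y| - 2 * size s + size s = #|X| * #|Y| - size s)%N by lia.
exact: perm_cycle_shift_subr_eq0.
Qed.

End CycleShift.

Section Cycle3.

Variables (T : finType) (a b c : T).

Definition cycle3 : {perm T} := tperm a b * tperm a c.

Lemma cycle3_on : perm_on [set x in [:: a; b; c]] cycle3.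
Proof.
apply: perm_onM; apply: subset_trans (tperm_on _ _) _; apply/subsetP => x;
  by rewrite !inE => /orP[]/eqP->; rewrite eqxx ?orbT.
Qed.

Hypotheses (ab : a != b) (ac : a != c) (bc : b != c).

Lemma cycle3E : [/\ cycle3 a = b, cycle3 b = c & cycle3 c = a].
Proof.
have tperm_acb : tperm a c b = b by rewrite tpermD // eq_sym.
have tperm_abc : tperm a b c = c by rewrite tpermD.
by rewrite !permM tpermL tpermR tpermL tperm_acb tperm_abc tpermR.
Qed.

End Cycle3.

Lemma inZpD p a b : inZp (a + b) = inZp a + inZp b :> 'I_p.+1.
Proof. by apply: val_inj; rewrite /= modnDm. Qed.

Lemma inZp0 p : inZp 0 = 0 :> 'I_p.+1.
Proof. exact: val_inj. Qed.

Section Delta3Perm.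

Variables m n : nat.
Hypotheses (m_gt0 : (0 < m)%N) (n_ge3 : (3 <= n)%N).

Local Notation Y := 'I_((2 * n).-1.+1).

Let half : Y := inZp n.
Let half2 : Y := inZp (n + 2).
Let s : seq Y := [:: half; half2; 0].
Let c : {perm Y} := cycle3 half half2 0.

Lemma order_Z2n : (2 * n).-1.+1 = (2 * n)%N.
Proof. by rewrite prednK // muln_gt0; apply: leq_trans n_ge3. Qed.

Lemma val_inZp_lt k : (k < 2 * n)%N -> val (inZp k : Y) = k.
Proof. by move=> k_lt; rewrite /= modn_small // order_Z2n. Qed.

Lemma half_distinct : [/\ half != half2, half != 0 & half2 != 0].
Proof.
by split; apply/eqP => /(congr1 val); rewrite ?val_inZp_lt /=; lia.
Qed.

Definition delta3_perm : {perm G m n} := cycle_shift (inZp 1) s c.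

Lemma delta3_permP : is_Delta_perm delta3_perm (Delta3 m n).
Proof.
have [half_h2 half_0 half2_0] := half_distinct.
have [c_half c_half2 c0] := cycle3E half_h2 half_0 half2_0.
have s_uniq : uniq s by rewrite /= !inE negb_or half_h2 half_0 half2_0.
have card_G : (#|'I_(m.-1.+1)| * #|Y| = 2 * m * n)%N.
  by rewrite !card_ord order_Z2n prednK // mulnCA mulnA.
apply: perm_trans (perm_cycle_shift_subr _ s_uniq (cycle3_on _ _ _) _) _.
  by rewrite card_G /=; nia.
rewrite card_G /= c_half c_half2 c0 /Delta3.
have -> : elt m n 1 0 = (inZp 1, 0) by rewrite /elt inZp0.
have -> : elt m n 2 0 = (inZp 1 *+ 2, 0) by rewrite /elt inZp0 mulr2n -inZpD.
have -> : elt m n 0 2 = (0, half2 - half).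
  by rewrite /elt inZp0 /half2 inZpD addrC addKr.
have -> : elt m n 0 (n - 2) = (0, 0 - half2).
  rewrite /elt inZp0 sub0r; congr pair; apply/eqP; rewrite -addr_eq0 -inZpD.
  apply/eqP/val_inj; rewrite /= order_Z2n.
  have -> : (n - 2 + (n + 2) = 2 * n)%N by lia.
  by rewrite modnn.
by rewrite /elt !inZp0 subr0.
Qed.

Lemma delta3_perm_column0 :
  delta3_perm (elt m n 0 0) = elt m n 0 n /\
  delta3_perm (elt m n 0 n) = elt m n 0 (n + 2).
Proof.
have [half_h2 half_0 half2_0] := half_distinct.
have [c_half _ c0] := cycle3E half_h2 half_0 half2_0.
have column0 := cycle_shift_column0 (inZp 1) (cycle3_on half half2 0).
by rewrite /elt !inZp0 !column0 ?inE ?eqxx ?orbT // c_half c0.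
Qed.

End Delta3Perm.

Theorem mainTheorem3 (m n : nat) :
  odd m -> (1 <= m)%N -> odd n -> (3 <= n)%N ->
  exists psi : {perm G m n},
    is_Delta_perm psi (Delta3 m n) /\
    psi (elt m n 0 0) = elt m n 0 n /\
    psi (elt m n 0 n) = elt m n 0 (n + 2).
Proof.
move=> _ m_gt0 _ n_ge3; exists (delta3_perm m n).
by split; [apply: delta3_permP | apply: delta3_perm_column0].
Qed.
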